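(* For all real $x\ge4$, $H'(x)>\dfrac{H(x)\log(H(x))}{x^2}$.
   Context: $H(x)=\int_0^1\frac{t^x-1}{t-1}\,dt$ for real $x\ge1$; it is smooth, satisfies $H(n)=1+\frac12+\cdots+\frac1n$ for $n\in\mathbb{N}$, and $H(x)=\psi(x+1)+\gamma$ with $\psi=\Gamma'/\Gamma$ the digamma function, so $H'(x)=\psi'(x+1)$. *)

From Stdlib Require Import Reals.
From Coquelicot Require Import Coquelicot.
Open Scope R_scope.

(* H(x) = \int_0^1 (t^x - 1)/(t - 1) dt, with t^x = Rpower t x
   (the values of the integrand at the endpoints t = 0, t = 1 are
   irrelevant for the Riemann integral). *)
Definition H (x : R) : R :=
  RInt (fun t => (Rpower t x - 1) / (t - 1)) 0 1.

(* Differentiating under the integral sign, H'(x) = \int_0^1 t^x ln t / (t - 1) dt.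
   Since -ln t >= 1 - t, this is at least \int_{1/4}^1 t^x dt >= (1 - 4^-5) / (x + 1).
   On the other hand the integrand of H is at most min (1/(1-t), x/t), which gives
   H(x) <= 1 + ln (x + 1).  Using ln y <= (y - 1/y)/2 for y = 1 + ln (x + 1) and for
   y = (x + 1)^(1/4), H ln H is bounded by an algebraic function of (x + 1)^(1/4)
   that stays below (1 - 4^-5) x^2 / (x + 1) for x >= 4. *)

From Stdlib Require Import Reals Lra.
From Coquelicot Require Import Coquelicot.
Open Scope R_scope.

Lemma ln_le_sub1 t : 0 < t -> ln t <= t - 1.
Proof.
  intros Ht. pose proof (exp_ineq1_le (ln t)) as He.
  rewrite exp_ln in He by exact Ht. lra.
Qed.

Lemma ln_nonpos t : 0 < t <= 1 -> ln t <= 0.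
Proof. intros Ht. pose proof (ln_le_sub1 t ltac:(lra)). lra. Qed.

Lemma ln_of_nonpos t : t <= 0 -> ln t = 0.
Proof. intros Ht. unfold ln. destruct (Rlt_dec 0 t); [exfalso; lra | reflexivity]. Qed.

Lemma neg_ln_le t : 0 < t -> - ln t <= (1 - t) / t.
Proof.
  intros Ht. pose proof (ln_le_sub1 (/ t) (Rinv_0_lt_compat _ Ht)) as Hl.
  rewrite ln_Rinv in Hl by exact Ht.
  replace ((1 - t) / t) with (/ t - 1) by (field; lra). lra.
Qed.

Lemma neg_ln_near1 t : 1/2 <= t < 1 ->
  1 - t <= - ln t <= (1 - t) + 2 * (1 - t) ^ 2.
Proof.
  intros Ht. split.
  - pose proof (ln_le_sub1 t ltac:(lra)). lra.
  - pose proof (neg_ln_le t ltac:(lra)) as Hl.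
    assert (Hinv : (1 - t) / t = (1 - t) + (1 - t) ^ 2 / t) by (field; lra).
    assert ((1 - t) ^ 2 / t <= 2 * (1 - t) ^ 2).
    { apply Rle_div_l; [lra|]. pose proof (pow2_ge_0 (1 - t)). nra. }
    lra.
Qed.

Lemma ln_sq_le_near1 t : 1/2 <= t < 1 -> ln t ^ 2 <= 4 * (1 - t) ^ 2.
Proof.
  intros Ht. destruct (neg_ln_near1 t Ht) as [Hlo Hhi].
  assert (0 <= (1 - t) * (1 - 2 * (1 - t))) by (apply Rmult_le_pos; lra).
  replace (ln t ^ 2) with ((- ln t) ^ 2) by ring.
  replace (4 * (1 - t) ^ 2) with ((2 * (1 - t)) ^ 2) by ring.
  apply pow_incr. lra.
Qed.

Lemma exp_le_exp a b : a <= b -> exp a <= exp b.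
Proof. intros [Hab | ->]; [left; apply exp_increasing |]; lra. Qed.

Lemma exp_sub1_le_mul_exp a : exp a - 1 <= a * exp a.
Proof.
  pose proof (exp_ineq1_le (- a)) as Hn. rewrite exp_Ropp in Hn.
  pose proof (exp_pos a) as Hp.
  apply Rmult_le_compat_r with (r := exp a) in Hn; [|lra].
  rewrite Rinv_l in Hn by lra. lra.
Qed.

Lemma exp_taylor1_le a : exp a - 1 - a <= a ^ 2 * Rmax 1 (exp a).
Proof.
  pose proof (exp_sub1_le_mul_exp a) as Hm.
  pose proof (exp_ineq1_le a) as Hl.
  pose proof (Rmax_l 1 (exp a)). pose proof (Rmax_r 1 (exp a)).
  assert (Ha : exp a - 1 - a <= a * (exp a - 1)) by nra.
  destruct (Rle_dec 0 a); nra.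
Qed.

Lemma exp_le_quadratic a : a <= 0 -> exp a <= 1 + a + a ^ 2.
Proof.
  intros Ha. pose proof (exp_taylor1_le a) as Ht.
  rewrite Rmax_left in Ht.
  - lra.
  - rewrite <- exp_0. apply exp_le_exp. exact Ha.
Qed.

Lemma Rpower_le_pow t y (k : nat) : 0 < t <= 1 -> INR k <= y -> Rpower t y <= t ^ k.
Proof.
  intros Ht Hk. unfold Rpower.
  rewrite <- (exp_ln (t ^ k)) by (apply pow_lt; lra).
  rewrite ln_pow by lra. apply exp_le_exp.
  pose proof (ln_nonpos t Ht). nra.
Qed.

Lemma continuous_of_linear_bound (g : R -> R) z K d : 0 < d ->
  (forall t, Rabs (t - z) < d -> Rabs (g t - g z) <= K * Rabs (t - z)) ->
  continuous g z.
Proof.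
  intros Hd Hg. apply continuity_pt_filterlim. intros eps Heps.
  assert (HK : 0 < Rabs K + 1) by (pose proof (Rabs_pos K); lra).
  exists (Rmin d (eps / (Rabs K + 1))). split.
  { apply Rmin_pos; [lra | apply Rdiv_lt_0_compat; lra]. }
  intros t [_ Ht]. simpl in Ht |- *. unfold R_dist in *.
  pose proof (Rmin_l d (eps / (Rabs K + 1))). pose proof (Rmin_r d (eps / (Rabs K + 1))).
  pose proof (Rabs_pos (t - z)). pose proof (Rle_abs K).
  apply Rle_lt_trans with ((Rabs K + 1) * Rabs (t - z)).
  - apply Rle_trans with (K * Rabs (t - z)); [apply Hg; lra | nra].
  - apply Rlt_le_trans with ((Rabs K + 1) * (eps / (Rabs K + 1))).
    + apply Rmult_lt_compat_l; lra.
    + right; field; lra.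
Qed.

Lemma ex_RInt_01_of_endpoint_bounds (f : R -> R) c0 c1 K : 0 <= K ->
  (forall z, 0 < z < 1 -> continuous f z) ->
  (forall t, 0 < t <= 1/2 -> Rabs (f t - c0) <= K * t) ->
  (forall t, 1/2 <= t < 1 -> Rabs (f t - c1) <= K * (1 - t)) ->
  ex_RInt f 0 1.
Proof.
  intros HK Hc H0 H1.
  set (g t := if Rle_dec t 0 then c0 else if Rle_dec 1 t then c1 else f t).
  apply ex_RInt_ext with g.
  { rewrite Rmin_left, Rmax_right by lra. intros t Ht. unfold g.
    destruct (Rle_dec t 0); [lra|]. destruct (Rle_dec 1 t); [lra|]. reflexivity. }
  apply (@ex_RInt_continuous R_CompleteNormedModule).
  rewrite Rmin_left, Rmax_right by lra. intros z Hz.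
  destruct (Req_dec z 0) as [-> | Hz0]; [|destruct (Req_dec z 1) as [-> | Hz1]].
  - apply continuous_of_linear_bound with K (1/2); [lra|]. intros t Ht.
    apply Rabs_def2 in Ht. unfold g.
    destruct (Rle_dec 0 0); [|lra]. destruct (Rle_dec t 0).
    + rewrite Rminus_diag, Rabs_R0. pose proof (Rabs_pos (t - 0)). nra.
    + destruct (Rle_dec 1 t); [lra|].
      rewrite Rminus_0_r, (Rabs_pos_eq t) by lra. apply H0. lra.
  - apply continuous_of_linear_bound with K (1/2); [lra|]. intros t Ht.
    apply Rabs_def2 in Ht. unfold g.
    destruct (Rle_dec 1 0); [lra|]. destruct (Rle_dec 1 1); [|lra].
    destruct (Rle_dec t 0); [lra|]. destruct (Rle_dec 1 t).
    + rewrite Rminus_diag, Rabs_R0. pose proof (Rabs_pos (t - 1)). nra.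
    + rewrite (Rabs_minus_sym t 1), (Rabs_pos_eq (1 - t)) by lra. apply H1. lra.
  - assert (Hd : 0 < Rmin z (1 - z)) by (apply Rmin_pos; lra).
    apply continuous_ext_loc with f; [| apply Hc; lra].
    exists (mkposreal _ Hd). intros y Hy. change (Rabs (y - z) < Rmin z (1 - z)) in Hy.
    pose proof (Rmin_l z (1 - z)). pose proof (Rmin_r z (1 - z)).
    apply Rabs_def2 in Hy. unfold g.
    destruct (Rle_dec y 0); [lra|]. destruct (Rle_dec 1 y); [lra|]. reflexivity.
Qed.

Lemma is_RInt_of_derive (F f : R -> R) a b : a <= b ->
  (forall t, a <= t <= b -> is_derive F t (f t)) ->
  (forall t, a <= t <= b -> continuous f t) ->
  is_RInt f a b (F b - F a).
Proof.
  intros Hab HF Hf.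
  apply (@is_RInt_derive R_CompleteNormedModule);
    rewrite Rmin_left, Rmax_right by exact Hab; assumption.
Qed.

Lemma abs_RInt_le_const_interior (f : R -> R) a b M : a <= b -> ex_RInt f a b ->
  (forall t, a < t < b -> Rabs (f t) <= M) -> Rabs (RInt f a b) <= (b - a) * M.
Proof.
  intros Hab Hf HM.
  assert (Hc : forall c : R, RInt (fun _ => c) a b = (b - a) * c).
  { intros c. rewrite (@RInt_const R_CompleteNormedModule). reflexivity. }
  assert (Hlo := RInt_le (fun _ => - M) f a b Hab (ex_RInt_const _ _ _) Hf).
  assert (Hhi := RInt_le f (fun _ => M) a b Hab Hf (ex_RInt_const _ _ _)).
  rewrite Hc in Hlo, Hhi. apply Rabs_le. split.
  - enough ((b - a) * - M <= RInt f a b) by lra.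
    apply Hlo. intros t Ht. pose proof (HM t Ht) as Ht'. apply Rabs_le_between in Ht'. lra.
  - apply Hhi. intros t Ht. pose proof (HM t Ht) as Ht'. apply Rabs_le_between in Ht'. lra.
Qed.

Lemma is_derive_of_sq_remainder (F : R -> R) x D :
  (forall h, h <> 0 -> Rabs h <= 1 -> Rabs (F (x + h) - F x - h * D) <= h ^ 2) ->
  is_derive F x D.
Proof.
  intros HF. apply is_derive_Reals. intros eps Heps.
  assert (Hd : 0 < Rmin 1 eps) by (apply Rmin_pos; lra).
  exists (mkposreal _ Hd). intros h Hh0 Hh. simpl in Hh.
  pose proof (Rmin_l 1 eps). pose proof (Rmin_r 1 eps).
  assert (Hh1 := HF h Hh0 ltac:(lra)).
  assert (Habs : 0 < Rabs h) by (apply Rabs_pos_lt; exact Hh0).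
  replace ((F (x + h) - F x) / h - D) with ((F (x + h) - F x - h * D) / h) by (field; lra).
  rewrite Rabs_div by exact Hh0.
  apply Rle_lt_trans with (Rabs h); [| lra].
  apply Rle_div_l; [lra|].
  replace (Rabs h * Rabs h) with (h ^ 2); [exact Hh1 |].
  rewrite <- Rabs_mult, Rabs_pos_eq by nra. ring.
Qed.

(** * Differentiating H under the integral sign *)

Definition H_integrand (x t : R) : R := (Rpower t x - 1) / (t - 1).

Definition dH_integrand (x t : R) : R := Rpower t x * ln t / (t - 1).

Definition dH (x : R) : R := RInt (dH_integrand x) 0 1.

Lemma Rabs_div_le_of_sq_bounds a s K : 0 < s ->
  - K * s ^ 2 <= a <= K * s ^ 2 -> Rabs (a / s) <= K * s.
Proof.
  intros Hs Ha. rewrite Rabs_div, (Rabs_pos_eq s) by lra.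
  apply Rle_div_l; [lra|]. apply Rabs_le. nra.
Qed.

Lemma ex_RInt_H_integrand y : 1 <= y -> ex_RInt (H_integrand y) 0 1.
Proof.
  intros Hy. apply ex_RInt_01_of_endpoint_bounds with 1 y (2 + 2 * y + 4 * y ^ 2); [nra | | |].
  - intros z Hz. apply (@ex_derive_continuous R_AbsRing R_NormedModule).
    unfold H_integrand, Rpower. auto_derive. lra.
  - intros t Ht. unfold H_integrand.
    pose proof (Rpower_le_pow t y 1 ltac:(lra) ltac:(simpl; lra)) as HP.
    pose proof (exp_pos (y * ln t)) as HP0. fold (Rpower t y) in HP0. simpl in HP.
    replace ((Rpower t y - 1) / (t - 1) - 1) with ((t - Rpower t y) / (1 - t)) by (field; lra).
    rewrite Rabs_pos_eq by (apply Rdiv_le_0_compat; lra).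
    apply Rle_div_l; [lra|].
    assert (0 <= (2 * y + 4 * y ^ 2) * (t * (1 - t))) by (apply Rmult_le_pos; nra).
    nra.
  - intros t Ht. unfold H_integrand, Rpower.
    pose proof (neg_ln_near1 t Ht) as HL.
    pose proof (exp_ineq1_le (y * ln t)).
    pose proof (exp_le_quadratic (y * ln t) ltac:(nra)).
    replace ((exp (y * ln t) - 1) / (t - 1) - y)
      with ((1 - exp (y * ln t) - y * (1 - t)) / (1 - t)) by (field; lra).
    apply Rabs_div_le_of_sq_bounds; [lra|].
    assert (y * (- ln t - (1 - t)) <= y * (2 * (1 - t) ^ 2)) by (apply Rmult_le_compat_l; lra).
    pose proof (ln_sq_le_near1 t Ht).
    assert (y ^ 2 * ln t ^ 2 <= y ^ 2 * (4 * (1 - t) ^ 2)) by (apply Rmult_le_compat_l; nra).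
    split; nra.
Qed.

Lemma ex_RInt_dH_integrand x : 2 <= x -> ex_RInt (dH_integrand x) 0 1.
Proof.
  intros Hx. apply ex_RInt_01_of_endpoint_bounds with 0 1 (2 + 4 * x); [lra | | |].
  - intros z Hz. apply (@ex_derive_continuous R_AbsRing R_NormedModule).
    unfold dH_integrand, Rpower. auto_derive. lra.
  - intros t Ht. unfold dH_integrand.
    pose proof (Rpower_le_pow t x 2 ltac:(lra) ltac:(simpl; lra)) as HP.
    pose proof (exp_pos (x * ln t)) as HP0. fold (Rpower t x) in HP0. simpl in HP.
    pose proof (neg_ln_le t ltac:(lra)) as HL.
    pose proof (ln_nonpos t ltac:(lra)).
    assert (Hb : Rpower t x * - ln t <= t * t * ((1 - t) / t)) by (apply Rmult_le_compat; nra).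
    replace (t * t * ((1 - t) / t)) with (t * (1 - t)) in Hb by (field; lra).
    replace (Rpower t x * ln t / (t - 1) - 0) with (Rpower t x * - ln t / (1 - t)) by (field; lra).
    rewrite Rabs_pos_eq by (apply Rdiv_le_0_compat; nra).
    apply Rle_div_l; [lra|].
    assert (0 <= (1 + 4 * x) * (t * (1 - t))) by (apply Rmult_le_pos; nra).
    nra.
  - intros t Ht. unfold dH_integrand, Rpower.
    pose proof (neg_ln_near1 t Ht) as HL.
    pose proof (exp_ineq1_le (x * ln t)).
    pose proof (Rpower_le_pow t x 0 ltac:(lra) ltac:(simpl; lra)) as HP.
    unfold Rpower in HP; simpl in HP.
    replace (exp (x * ln t) * ln t / (t - 1) - 1)
      with ((exp (x * ln t) * - ln t - (1 - t)) / (1 - t)) by (field; lra).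
    apply Rabs_div_le_of_sq_bounds; [lra|].
    pose proof (ln_sq_le_near1 t Ht).
    assert (x * ln t ^ 2 <= x * (4 * (1 - t) ^ 2)) by (apply Rmult_le_compat_l; lra).
    assert (exp (x * ln t) * - ln t <= - ln t) by nra.
    assert ((1 + x * ln t) * - ln t <= exp (x * ln t) * - ln t) by (apply Rmult_le_compat_r; lra).
    split; nra.
Qed.

Lemma H_integrand_remainder x h t : 3 <= x -> -1 <= h <= 1 -> 0 < t < 1 ->
  Rabs (H_integrand (x + h) t - H_integrand x t - h * dH_integrand x t) <= h ^ 2.
Proof.
  intros Hx Hh Ht. unfold H_integrand, dH_integrand.
  assert (HP := Rpower_le_pow t x 3 ltac:(lra) ltac:(simpl; lra)). simpl in HP.
  assert (HP0 : 0 < Rpower t x) by apply exp_pos.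
  assert (HL := ln_nonpos t ltac:(lra)).
  assert (HL1 := neg_ln_le t ltac:(lra)).
  unfold Rpower in *. rewrite Rmult_plus_distr_r, exp_plus.
  set (P := exp (x * ln t)) in *. set (a := h * ln t).
  replace ((P * exp a - 1) / (t - 1) - (P - 1) / (t - 1) - h * (P * ln t / (t - 1)))
    with (P * (exp a - 1 - a) / (t - 1)) by (unfold a; field; lra).
  (* [exp a <= 1/t] because [h >= -1]; the factor [t ^ x <= t ^ 3] absorbs the
     resulting powers of [1/t]. *)
  assert (Hmax : Rmax 1 (exp a) <= / t).
  { apply Rmax_lub.
    - rewrite <- Rinv_1. apply Rinv_le_contravar; lra.
    - rewrite <- (exp_ln (/ t)) by (apply Rinv_0_lt_compat; lra).
      rewrite ln_Rinv by lra. apply exp_le_exp. unfold a. nra. }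
  assert (Ht1 := exp_taylor1_le a).
  assert (Ht0 : 0 <= exp a - 1 - a) by (pose proof (exp_ineq1_le a); lra).
  assert (Ha2 : a ^ 2 <= h ^ 2 * ((1 - t) / t) ^ 2).
  { unfold a. rewrite Rpow_mult_distr. apply Rmult_le_compat_l; [nra|].
    replace (ln t ^ 2) with ((- ln t) ^ 2) by ring. apply pow_incr. lra. }
  assert (E : P * (exp a - 1 - a) <= t ^ 3 * (h ^ 2 * ((1 - t) / t) ^ 2 * / t)).
  { apply Rmult_le_compat; try lra.
    apply Rle_trans with (a ^ 2 * Rmax 1 (exp a)); [exact Ht1|].
    apply Rmult_le_compat; try lra; [apply pow2_ge_0 | pose proof (Rmax_l 1 (exp a)); lra]. }
  replace (t ^ 3 * (h ^ 2 * ((1 - t) / t) ^ 2 * / t)) with (h ^ 2 * (1 - t) * (1 - t)) in E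
    by (field; lra).
  rewrite Rabs_div, Rabs_pos_eq, Rabs_left by (try apply Rmult_le_pos; lra).
  apply Rle_div_l; [lra|].
  assert (0 <= h ^ 2 * (1 - t) * t) by (apply Rmult_le_pos; [apply Rmult_le_pos|]; nra).
  nra.
Qed.

Lemma is_derive_H x : 3 <= x -> is_derive H x (dH x).
Proof.
  intros Hx. apply is_derive_of_sq_remainder. intros h Hh0 Hh.
  apply Rabs_le_between in Hh.
  set (g t := H_integrand (x + h) t - H_integrand x t - h * dH_integrand x t).
  assert (I1 := ex_RInt_H_integrand (x + h) ltac:(lra)).
  assert (I2 := ex_RInt_H_integrand x ltac:(lra)).
  assert (I3 := ex_RInt_dH_integrand x ltac:(lra)).
  assert (I12 : ex_RInt (fun t => H_integrand (x + h) t - H_integrand x t) 0 1)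
    by (apply (@ex_RInt_minus R_NormedModule); assumption).
  assert (I3h : ex_RInt (fun t => h * dH_integrand x t) 0 1)
    by (apply (@ex_RInt_scal R_NormedModule); assumption).
  assert (E : RInt g 0 1 = H (x + h) - H x - h * dH x).
  { unfold g, H, dH.
    rewrite (@RInt_minus R_CompleteNormedModule) by assumption.
    rewrite (@RInt_minus R_CompleteNormedModule) by assumption.
    rewrite (@RInt_scal R_CompleteNormedModule) by assumption.
    reflexivity. }
  rewrite <- E.
  replace (h ^ 2) with ((1 - 0) * h ^ 2) by ring.
  apply abs_RInt_le_const_interior; [lra | | ].
  - apply (@ex_RInt_minus R_NormedModule); assumption.
  - intros t Ht. apply H_integrand_remainder; lra.
Qed.

(** * A lower bound for H' and an upper bound for H *)

Lemma Rpower_le_dH_integrand x t : 0 < t < 1 -> Rpower t x <= dH_integrand x t.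
Proof.
  intros Ht. unfold dH_integrand.
  assert (HP : 0 < Rpower t x) by apply exp_pos.
  pose proof (ln_le_sub1 t ltac:(lra)).
  replace (Rpower t x * ln t / (t - 1)) with (Rpower t x * (- ln t / (1 - t))) by (field; lra).
  rewrite <- (Rmult_1_r (Rpower t x)) at 1.
  apply Rmult_le_compat_l; [lra|]. apply Rle_div_r; lra.
Qed.

Lemma is_RInt_Rpower x a b : 0 <= x -> 0 < a <= b ->
  is_RInt (fun t => Rpower t x) a b ((Rpower b (x + 1) - Rpower a (x + 1)) / (x + 1)).
Proof.
  intros Hx Hab. unfold Rdiv. rewrite Rmult_minus_distr_r.
  apply is_RInt_of_derive with (F := fun t => Rpower t (x + 1) * / (x + 1)); [lra | |];
    intros t Ht; unfold Rpower.
  - auto_derive; [lra|].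
    replace ((x + 1) * ln t) with (x * ln t + ln t) by ring.
    rewrite exp_plus, exp_ln by lra. field. lra.
  - apply (@ex_derive_continuous R_AbsRing R_NormedModule). auto_derive. lra.
Qed.

Lemma dH_ge x : 4 <= x -> 1023 / 1024 / (x + 1) <= dH x.
Proof.
  intros Hx. unfold dH.
  assert (Hd := ex_RInt_dH_integrand x ltac:(lra)).
  assert (Hd1 : ex_RInt (dH_integrand x) 0 (1/4))
    by (apply (@ex_RInt_Chasles_1 R_CompleteNormedModule) with 1; [lra | exact Hd]).
  assert (Hd2 : ex_RInt (dH_integrand x) (1/4) 1)
    by (apply (@ex_RInt_Chasles_2 R_CompleteNormedModule) with 0; [lra | exact Hd]).
  rewrite <- (@RInt_Chasles R_CompleteNormedModule _ 0 (1/4) 1 Hd1 Hd2).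
  assert (Hlo : 0 <= RInt (dH_integrand x) 0 (1/4)).
  { apply RInt_ge_0; [lra | exact Hd1 |]. intros t Ht.
    pose proof (Rpower_le_dH_integrand x t ltac:(lra)).
    assert (0 < Rpower t x) by apply exp_pos. lra. }
  assert (Hhi : (Rpower 1 (x + 1) - Rpower (1/4) (x + 1)) / (x + 1)
                <= RInt (dH_integrand x) (1/4) 1).
  { apply (is_RInt_le (fun t => Rpower t x) (dH_integrand x) (1/4) 1); [lra | | |].
    - apply is_RInt_Rpower; lra.
    - apply (@RInt_correct R_CompleteNormedModule). exact Hd2.
    - intros t Ht. apply Rpower_le_dH_integrand. lra. }
  (* [1023/1024 = 1 - (1/4)^5] *)
  assert (Hq : Rpower (1/4) (x + 1) <= (1/4) ^ 5)
    by (apply Rpower_le_pow; [lra | simpl; lra]).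
  assert (H1 : Rpower 1 (x + 1) = 1) by (unfold Rpower; rewrite ln_1, Rmult_0_r; apply exp_0).
  rewrite H1 in Hhi.
  assert (1023 / 1024 / (x + 1) <= (1 - Rpower (1/4) (x + 1)) / (x + 1)).
  { apply Rmult_le_compat_r; [left; apply Rinv_0_lt_compat; lra | simpl in Hq; lra]. }
  change (plus ?a ?b) with (a + b). lra.
Qed.

Lemma H_integrand_le_inv_one_sub x t : 0 < t < 1 -> H_integrand x t <= / (1 - t).
Proof.
  intros Ht. unfold H_integrand.
  assert (0 < Rpower t x) by apply exp_pos.
  replace ((Rpower t x - 1) / (t - 1)) with ((1 - Rpower t x) * / (1 - t)) by (field; lra).
  rewrite <- (Rmult_1_l (/ (1 - t))) at 2.
  apply Rmult_le_compat_r; [left; apply Rinv_0_lt_compat |]; lra.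
Qed.

Lemma H_integrand_le_div x t : 0 <= x -> 0 < t < 1 -> H_integrand x t <= x / t.
Proof.
  intros Hx Ht. unfold H_integrand, Rpower.
  pose proof (exp_ineq1_le (x * ln t)).
  pose proof (neg_ln_le t ltac:(lra)) as HL.
  assert (x * - ln t <= x * ((1 - t) / t)) by (apply Rmult_le_compat_l; lra).
  replace ((exp (x * ln t) - 1) / (t - 1)) with ((1 - exp (x * ln t)) / (1 - t)) by (field; lra).
  replace (x / t) with (x * ((1 - t) / t) / (1 - t)) by (field; lra).
  apply Rmult_le_compat_r; [left; apply Rinv_0_lt_compat |]; lra.
Qed.

Lemma H_le_one_add_ln x : 1 <= x -> H x <= 1 + ln (x + 1).
Proof.
  intros Hx. change (H x) with (RInt (H_integrand x) 0 1).
  (* At [c] the two bounds [1/(1-t)] and [x/t] on the integrand cross. *)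
  set (c := x / (x + 1)).
  assert (Hc : 0 < c < 1).
  { unfold c. split; [apply Rdiv_lt_0_compat | apply Rlt_div_l]; lra. }
  assert (Hf := ex_RInt_H_integrand x Hx).
  assert (Hf1 : ex_RInt (H_integrand x) 0 c)
    by (apply (@ex_RInt_Chasles_1 R_CompleteNormedModule) with 1; [lra | exact Hf]).
  assert (Hf2 : ex_RInt (H_integrand x) c 1)
    by (apply (@ex_RInt_Chasles_2 R_CompleteNormedModule) with 0; [lra | exact Hf]).
  rewrite <- (@RInt_Chasles R_CompleteNormedModule _ 0 c 1 Hf1 Hf2).
  change (plus ?a ?b) with (a + b).
  assert (Hlo : RInt (H_integrand x) 0 c <= - ln (1 - c) - - ln (1 - 0)).
  { apply (is_RInt_le (H_integrand x) (fun t => / (1 - t)) 0 c); [lra | | |].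
    - apply (@RInt_correct R_CompleteNormedModule). exact Hf1.
    - apply is_RInt_of_derive with (F := fun t => - ln (1 - t)); [lra | |]; intros t Ht.
      + auto_derive; [lra | field; lra].
      + apply (@ex_derive_continuous R_AbsRing R_NormedModule). auto_derive. lra.
    - intros t Ht. apply H_integrand_le_inv_one_sub. lra. }
  assert (Hhi : RInt (H_integrand x) c 1 <= x * ln 1 - x * ln c).
  { apply (is_RInt_le (H_integrand x) (fun t => x / t) c 1); [lra | | |].
    - apply (@RInt_correct R_CompleteNormedModule). exact Hf2.
    - apply is_RInt_of_derive with (F := fun t => x * ln t); [lra | |]; intros t Ht.
      + auto_derive; [lra | field; lra].
      + apply (@ex_derive_continuous R_AbsRing R_NormedModule). auto_derive. lra.
    - intros t Ht. apply H_integrand_le_div; lra. }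
  assert (E1 : - ln (1 - c) = ln (x + 1)).
  { replace (1 - c) with (/ (x + 1)) by (unfold c; field; lra).
    rewrite ln_Rinv by lra. ring. }
  assert (E2 : - x * ln c <= 1).
  { replace c with (/ ((x + 1) / x)) by (unfold c; field; lra).
    rewrite ln_Rinv by (apply Rdiv_lt_0_compat; lra).
    assert (Hl := ln_le_sub1 ((x + 1) / x) ltac:(apply Rdiv_lt_0_compat; lra)).
    replace ((x + 1) / x - 1) with (/ x) in Hl by (field; lra).
    apply Rmult_le_compat_l with (r := x) in Hl; [| lra].
    rewrite Rinv_r in Hl by lra. lra. }
  rewrite E1, Rminus_0_r, ln_1 in Hlo. rewrite ln_1 in Hhi. lra.
Qed.

(** * Estimating H ln H *)

Lemma ln_le_half_sub_inv y : 1 <= y -> ln y <= (y - / y) / 2.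
Proof.
  intros Hy.
  assert (Hln : is_RInt (fun s => / s) 1 y (ln y - ln 1)).
  { apply is_RInt_of_derive; [exact Hy | |]; intros t Ht.
    - apply is_derive_ln. lra.
    - apply (@ex_derive_continuous R_AbsRing R_NormedModule). auto_derive. lra. }
  assert (Hg : is_RInt (fun s => (1 + / s ^ 2) / 2) 1 y ((y - / y) / 2 - (1 - / 1) / 2)).
  { apply is_RInt_of_derive with (F := fun s => (s - / s) / 2); [exact Hy | |]; intros t Ht.
    - auto_derive. lra. field. lra.
    - apply (@ex_derive_continuous R_AbsRing R_NormedModule). auto_derive. nra. }
  assert (Hpt : forall t, 1 < t < y -> / t <= (1 + / t ^ 2) / 2).
  { intros t Ht.
    replace ((1 + / t ^ 2) / 2) with (/ t + (1 - / t) ^ 2 / 2) by (field; lra).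
    pose proof (pow2_ge_0 (1 - / t)). lra. }
  assert (Hle := is_RInt_le _ _ _ _ _ _ Hy Hln Hg Hpt).
  rewrite ln_1, Rinv_1 in Hle. lra.
Qed.

Lemma mul_ln_le_mul_ln h U : 1 <= U -> h <= U -> h * ln h <= U * ln U.
Proof.
  intros HU HhU.
  assert (HlnU : 0 <= ln U) by (rewrite <- ln_1; apply ln_le; lra).
  destruct (Rle_dec h 1) as [Hh1 | Hh1].
  - assert (h * ln h <= 0).
    { destruct (Rle_dec h 0) as [Hh0 | Hh0].
      + rewrite (ln_of_nonpos h Hh0). lra.
      + pose proof (ln_nonpos h ltac:(lra)). nra. }
    nra.
  - assert (0 <= ln h <= ln U) by (split; [rewrite <- ln_1|]; apply ln_le; lra).
    apply Rmult_le_compat; lra.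
Qed.

Lemma quarter_root_poly_lt q : 0 < q -> 5 <= q ^ 4 ->
  (2 * (q - / q)) * (2 * (q - / q) + 2) / 2 < 1023 / 1024 * ((q ^ 4 - 1) ^ 2 / q ^ 4).
Proof.
  (* In terms of [p = q^2] this is a cubic inequality for [p >= sqrt 5], once [q]
     is eliminated by [3 q <= p + 9/4]. *)
  intros Hq H5. set (p := q * q).
  assert (Hp4 : q ^ 4 = p * p) by (unfold p; ring). rewrite Hp4 in *.
  assert (Hp : 2236 / 1000 <= p) by (unfold p in *; nra).
  assert (Hqp : q <= (p + 9/4) / 3) by (pose proof (pow2_ge_0 (q - 3/2)); unfold p; nra).
  assert (Hcubic : 2 * p * (p + q - 1) < 1023 / 1024 * (p - 1) * (p + 1) ^ 2).
  { set (e := p - 2236 / 1000).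
    assert (0 <= e) by (unfold e; lra).
    assert (2 * p * (p + q - 1) <= 2 * p * (4 * p - 3/4) / 3) by nra.
    replace p with (2236 / 1000 + e) in * by (unfold e; ring). nra. }
  replace ((2 * (q - / q)) * (2 * (q - / q) + 2) / 2)
    with (2 * p * (p + q - 1) * (p - 1) / (p * p)) by (unfold p; field; lra).
  replace (1023 / 1024 * ((p * p - 1) ^ 2 / (p * p)))
    with (1023 / 1024 * (p - 1) * (p + 1) ^ 2 * (p - 1) / (p * p)) by (field; lra).
  unfold Rdiv. apply Rmult_lt_compat_r; [apply Rinv_0_lt_compat; nra |].
  apply Rmult_lt_compat_r; lra.
Qed.

Lemma ln_succ_poly_lt x : 4 <= x ->
  ln (x + 1) * (ln (x + 1) + 2) / 2 < 1023 / 1024 * (x ^ 2 / (x + 1)).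
Proof.
  intros Hx.
  set (q := sqrt (sqrt (x + 1))).
  assert (Hs : 0 < sqrt (x + 1)) by (apply sqrt_lt_R0; lra).
  assert (Hq : 0 < q) by (apply sqrt_lt_R0; lra).
  assert (Hq4 : q ^ 4 = x + 1).
  { replace (q ^ 4) with ((q * q) * (q * q)) by ring. unfold q.
    rewrite !sqrt_sqrt; lra. }
  assert (Hq1 : 1 <= q).
  { destruct (Rle_lt_dec 1 q) as [| Hlt]; [assumption |].
    assert (q ^ 4 <= 1 ^ 4) by (apply pow_incr; lra). lra. }
  assert (Hw : ln (x + 1) = 4 * ln q) by (rewrite <- Hq4, ln_pow by lra; simpl; ring).
  assert (Hv : ln (x + 1) <= 2 * (q - / q))
    by (pose proof (ln_le_half_sub_inv q Hq1); lra).
  assert (Hw0 : 0 <= ln (x + 1)) by (rewrite <- ln_1; apply ln_le; lra).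
  pose proof (quarter_root_poly_lt q Hq ltac:(lra)) as Hpoly.
  rewrite Hq4 in Hpoly. replace (x + 1 - 1) with x in Hpoly by ring.
  eapply Rle_lt_trans; [| exact Hpoly]. nra.
Qed.

Lemma H_mul_ln_H_lt x : 4 <= x -> H x * ln (H x) < 1023 / 1024 * (x ^ 2 / (x + 1)).
Proof.
  intros Hx. set (w := ln (x + 1)).
  assert (Hw : 0 <= w) by (unfold w; rewrite <- ln_1; apply ln_le; lra).
  apply Rle_lt_trans with ((1 + w) * ln (1 + w)).
  { apply mul_ln_le_mul_ln; [lra | apply H_le_one_add_ln; lra]. }
  apply Rle_lt_trans with (w * (w + 2) / 2); [| apply ln_succ_poly_lt; exact Hx].
  replace (w * (w + 2) / 2) with ((1 + w) * ((1 + w - / (1 + w)) / 2)) by (field; lra).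
  apply Rmult_le_compat_l; [lra | apply ln_le_half_sub_inv; lra].
Qed.

Theorem mainTheorem16 (x : R) (hx : 4 <= x) :
  Derive H x > H x * ln (H x) / x ^ 2.
Proof.
  rewrite (is_derive_unique _ _ _ (is_derive_H x ltac:(lra))).
  assert (Hx2 : 0 < x ^ 2) by nra.
  pose proof (dH_ge x hx) as Hd.
  pose proof (H_mul_ln_H_lt x hx) as Hh.
  apply Rlt_gt, Rlt_div_l; [lra |].
  apply Rlt_le_trans with (1023 / 1024 / (x + 1) * x ^ 2).
  - replace (1023 / 1024 / (x + 1) * x ^ 2) with (1023 / 1024 * (x ^ 2 / (x + 1))) by (field; lra).
    exact Hh.
  - apply Rmult_le_compat_r; lra.
Qed.
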